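(* Consider an incoming approach (queue $i$) of a signalized intersection in the ''one+two lane'' model. A single shared lane of vehicles splits near the intersection into two dedicated lanes, one for straight-going and one for left-turning vehicles. The traffic light senses whether the head position of each dedicated lane is occupied, so it knows the movements of the (up to two) leading vehicles. A traffic phase $\phi$ gives a green interval of $n$ time slots, with at most one vehicle passing per slot. The possible head configurations are as follows. - Conf. I: the straight-lane head is empty and the two leading vehicles both turn left. - Conf. IV: the left-lane head is empty and the two leading vehicles both go straight. - Conf. II and Conf. III: both heads are occupied, one by a straight-going and one by a left-turning vehicle. Let $g=2$ in Conf. I or IV and $g=1$ in Conf. II or III. Assume: - the phase $\phi$ permits the movement of the $g$ guaranteed leading vehicles, so these $g$ vehicles pass; - the remaining vehicles form a sub-queue of $m=n-g$ positions that behaves as a single lane. In this single lane, vehicles pass one per slot in queue order while the head intends the permitted movement; a head vehicle intending the other movement blocks itself and all vehicles behind it. In the sub-queue, $T\le m$ vehicles are communicating, at sub-queue positions $1\le v_1<\dots<v_T\le m$, with known movements. Each non-communicating sub-queue vehicle independently intends the permitted movement with probability $p_1$ and the other movement with probability $p_2=1-p_1$, where $0<p_1<1$. Set $v_0=1$ and $v_{T+1}=m+1$. Let $K^{\phi}_i$ be the number of vehicles of queue $i$ that pass. If all communicating sub-queue vehicles intend the permitted movement (condition $C_3$), then $$E(K^{\phi}_i)=g+\sum_{l=0}^{T}\frac{p_1^{1-l}}{p_2}\Big((p_1+p_2v_l)p_1^{v_l-1}+(1-2p_1-p_2v_{l+1})p_1^{v_{l+1}-2}\Big)+(n-g)\,p_1^{\,n-g-T}.$$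 If the first communicating sub-queue vehicle not intending the permitted movement is the $L$-th one, at position $v_L$ with $1\le L\le T$ (condition $C_4$), then $$E(K^{\phi}_i)=g+\sum_{l=0}^{L-1}\frac{p_1^{1-l}}{p_2}\Big((p_1+p_2v_l)p_1^{v_l-1}+(1-2p_1-p_2v_{l+1})p_1^{v_{l+1}-2}\Big)+(v_L-1)\,p_1^{\,v_L-L}.$$ In particular, for Conf. I/IV the leading constant is $2$ with $T\le n-2$ and final $C_3$ term $(n-2)p_1^{n-2-T}$; for Conf. II/III it is $1$ with $T\le n-1$ and final $C_3$ term $(n-1)p_1^{n-1-T}$.
   Context: Right-turning vehicles are merged with straight-going ones, so only two movements exist. The expectation is over the random intentions of the non-communicating vehicles in the sub-queue, conditional on the known information. Time index $t$ is suppressed. *)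

From mathcomp Require Import all_boot all_order all_algebra.
Set Implicit Arguments. Unset Strict Implicit. Unset Printing Implicit Defensive.
Import Order.TTheory GRing.Theory Num.Theory.
Local Open Scope ring_scope.

Inductive conf := ConfI | ConfII | ConfIII | ConfIV.

Definition g_of (c : conf) : nat :=
  match c with ConfI | ConfIV => 2 | ConfII | ConfIII => 1 end%N.

(* An intention profile of the sub-queue: w i = true iff the vehicle at
   sub-queue position i.+1 intends the permitted movement. *)

(* Number of sub-queue vehicles that pass: the length of the leading run of
   vehicles intending the permitted movement (single lane, blocking). *)
Definition sub_passed (m : nat) (w : {ffun 'I_m -> bool}) : nat :=
  #|[set i : 'I_m | [forall j : 'I_m, (j <= i)%N ==> w j]]|.

Definition communicating (m T : nat) (v : nat -> nat) (i : 'I_m) : bool :=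
  [exists l : 'I_T.+1, (1 <= l)%N && (v l == i.+1)].

Definition consistent (m T : nat) (v : nat -> nat) (c : nat -> bool)
  (w : {ffun 'I_m -> bool}) : bool :=
  [forall i : 'I_m, forall l : 'I_T.+1,
     ((1 <= l)%N && (v l == i.+1)) ==> (w i == c l)].

Definition weight (R : ringType) (p1 p2 : R) (m T : nat) (v : nat -> nat)
  (w : {ffun 'I_m -> bool}) : R :=
  \prod_(i < m | ~~ communicating T v i) (if w i then p1 else p2).

Definition EK (R : ringType) (p1 p2 : R) (cf : conf) (n T : nat)
  (v : nat -> nat) (c : nat -> bool) : R :=
  let m := (n - g_of cf)%N in
  \sum_(w : {ffun 'I_m -> bool} | consistent T v c w)
     weight p1 p2 T v w * ((g_of cf + sub_passed w)%N)%:R.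

Definition term (R : unitRingType) (p1 p2 : R) (v : nat -> nat) (l : nat) : R :=
  p1 ^ (1 - (l%:Z))%R / p2 *
  ((p1 + p2 * (v l)%:R) * p1 ^ ((v l)%:Z - 1)%R
   + (1 - 2 * p1 - p2 * (v l.+1)%:R) * p1 ^ ((v l.+1)%:Z - 2)%R).

From mathcomp Require Import all_boot all_order all_algebra.
From mathcomp Require Import ring.
Set Implicit Arguments. Unset Strict Implicit. Unset Printing Implicit Defensive.
Import Order.TTheory GRing.Theory Num.Theory.
Local Open Scope ring_scope.

(* K = g + sum_(j = 1..m) [the first j sub-queue vehicles pass], so E(K) is g
   plus the sum over j of the probability that the first j vehicles all intend
   the permitted movement, which by independence is a product of per-position
   probabilities: p1 for a non-communicating vehicle, 0 or 1 for a
   communicating one.  Under C3, exactly l of the first j vehicles communicate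
   when v_l <= j < v_(l+1), so that probability is p1^(j-l).  The l-th summand
   of the closed formula is the geometric sum of p1^(j-l) over this block plus
   the difference of consecutive telescoping terms (v_l - 1) p1^(v_l - l); the
   last of these is the final term of the formula.  Under C4 every probability
   with j >= v_L vanishes. *)

Definition intent_prob (R : pzRingType) (p1 : R) (T : nat) (v : nat -> nat)
    (c : nat -> bool) (i : nat) : R :=
  if [pick l : 'I_T.+1 | (1 <= l)%N && (v l == i)] is Some l then (c l)%:R
  else p1.

Definition pass_prob (R : pzRingType) (p1 : R) (T : nat) (v : nat -> nat)
    (c : nat -> bool) (j : nat) : R :=
  \prod_(1 <= i < j.+1) intent_prob p1 T v c i.

Definition ncomm (T : nat) (v : nat -> nat) (j : nat) : nat :=
  \sum_(1 <= l < T.+1) (v l <= j).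

Definition tail_term (R : pzRingType) (x : R) (v : nat -> nat) (l : nat) : R :=
  (v l - 1)%:R * x ^+ (v l - l).

Lemma prodr_natb (R : comPzRingType) (I : finType) (P : pred I) (b : I -> bool) :
  \prod_(i | P i) ((b i)%:R : R) = [forall i, P i ==> b i]%:R.
Proof.
have [/forallP Pb | /forallPn [i]] := boolP [forall i, P i ==> b i].
  by rewrite big1 // => i Pi; move/implyP: (Pb i) => /(_ Pi) ->.
by rewrite negb_imply => /andP [Pi /negbTE bi]; rewrite (bigD1 i) //= bi mul0r.
Qed.

Lemma sub_passed_sum m (w : {ffun 'I_m -> bool}) :
  sub_passed w = (\sum_(k < m) [forall j : 'I_m, (j < k.+1)%N ==> w j])%N.
Proof.
by rewrite /sub_passed -sum1_card big_mkcond; apply: eq_bigr => k _; rewrite inE.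
Qed.

Lemma pass_prob0 (R : pzRingType) (p1 : R) T v c : pass_prob p1 T v c 0 = 1.
Proof. by rewrite /pass_prob big_geq. Qed.

Lemma pass_probS (R : pzRingType) (p1 : R) T v c j :
  pass_prob p1 T v c j.+1 = pass_prob p1 T v c j * intent_prob p1 T v c j.+1.
Proof. by rewrite /pass_prob big_nat_recr. Qed.

Lemma geometric_sum_nat (R : comPzRingType) (x : R) a b : (a <= b)%N ->
  (1 - x) * \sum_(a <= j < b) x ^+ j = x ^+ a - x ^+ b.
Proof.
move=> /subnKC <-; elim: (b - a)%N => [|d IH].
  by rewrite addn0 big_geq // mulr0 subrr.
by rewrite addnS big_nat_recr ?leq_addr //= mulrDr IH exprS; ring.
Qed.

Lemma expfz_subn (R : fieldType) (x : R) (a k : nat) : x != 0 ->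
  x ^ (a%:Z - k%:Z) = x ^+ a / x ^+ k.
Proof. by move=> x_neq0; rewrite expfzDr // -exprnN. Qed.

Section Expectation.

Variables (R : comNzRingType) (p1 p2 : R) (T : nat) (v : nat -> nat).
Variable c : nat -> bool.
Hypothesis v_inj : {in [pred l | (1 <= l <= T)%N] &, injective v}.

Lemma v_inj_ord (l1 l2 : 'I_T.+1) : (1 <= l1)%N -> (1 <= l2)%N ->
  v l1 = v l2 -> l1 = l2.
Proof.
move=> l1_pos l2_pos /v_inj eq_l12; apply: val_inj; apply: eq_l12.
  by rewrite inE l1_pos (ltnSE (ltn_ord l1)).
by rewrite inE l2_pos (ltnSE (ltn_ord l2)).
Qed.

Lemma intent_prob_comm l : (1 <= l)%N -> (l <= T)%N ->
  intent_prob p1 T v c (v l) = (c l)%:R.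
Proof.
move=> l_pos le_lT; rewrite /intent_prob.
case: pickP => [l' /andP [l'_pos /eqP vl'] | /(_ (inord l))].
  by rewrite (@v_inj_ord l' (inord l)) ?inordK // vl'.
by rewrite inordK // l_pos eqxx.
Qed.

Lemma sum_weight_leading_run m k : p1 + p2 = 1 -> (k <= m)%N ->
  \sum_(w : {ffun 'I_m -> bool} | consistent T v c w)
     weight p1 p2 T v w * [forall j : 'I_m, (j < k)%N ==> w j]%:R
  = pass_prob p1 T v c k.
Proof.
move=> p1_add_p2 le_km.
pose F (i : 'I_m) (b : bool) : R :=
  (if ~~ communicating T v i then (if b then p1 else p2) else 1)
  * \prod_(l : 'I_T.+1 | (1 <= l)%N && (v l == i.+1)) (b == c l)%:R
  * (if (i < k)%N then b%:R else 1).
have F_prod (w : {ffun 'I_m -> bool}) : \prod_i F i (w i) = weight p1 p2 T v w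
    * (consistent T v c w)%:R * [forall j : 'I_m, (j < k)%N ==> w j]%:R.
  rewrite !big_split /=; congr (_ * _ * _).
  - by rewrite /weight [RHS]big_mkcond.
  - under eq_bigr do rewrite prodr_natb.
    by rewrite prodr_natb.
  - by rewrite -big_mkcond prodr_natb.
have F_sum i : \sum_b F i b = if (i < k)%N then intent_prob p1 T v c i.+1 else 1.
  rewrite big_bool /F /intent_prob.
  have [/existsP [l0 /andP [l0_pos /eqP vl0]] | free] := boolP (communicating T v i).
    have only_l0 (l : 'I_T.+1) : ((1 <= l)%N && (v l == i.+1)) = (l == l0).
      apply/andP/eqP => [[l_pos /eqP vl] | ->]; last by rewrite l0_pos vl0.
      by apply: v_inj_ord; rewrite ?vl ?vl0.
    rewrite !(eq_bigl _ _ only_l0) !big_pred1_eq.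
    case: pickP => [l /[!only_l0] /eqP -> | /(_ l0) /[!only_l0] /[!eqxx] //].
    by case: (i < k)%N; case: (c l0); rewrite /= ?mulr1 ?mul1r ?mulr0 ?addr0 ?add0r.
  have none (l : 'I_T.+1) : ((1 <= l)%N && (v l == i.+1)) = false.
    by apply/negP => comm_l; move/negP: free; apply; apply/existsP; exists l.
  rewrite !(eq_bigl _ _ none) !big_pred0 //; case: pickP => [l /[!none] //|_].
  by case: (i < k)%N; rewrite /= ?mulr1 ?mulr0 ?addr0.
rewrite big_mkcond /=.
rewrite (eq_bigr (fun w : {ffun 'I_m -> bool} => \prod_i F i (w i))); last first.
  by move=> w _; rewrite F_prod; case: consistent; rewrite ?mulr1 ?mulr0 ?mul0r.
rewrite -(bigA_distr_bigA F) /=; under eq_bigr do rewrite F_sum.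
rewrite -big_mkcond /pass_prob big_add1 /= (big_nat_widen 0 k m) // big_mkord.
by apply: eq_bigl.
Qed.

Lemma EK_sum_pass_prob cf n : p1 + p2 = 1 ->
  EK p1 p2 cf n T v c
  = (g_of cf)%:R + \sum_(1 <= j < (n - g_of cf).+1) pass_prob p1 T v c j.
Proof.
move=> p1_add_p2; rewrite /EK /=; set m := (n - g_of cf)%N.
have total : \sum_(w : {ffun 'I_m -> bool} | consistent T v c w)
    weight p1 p2 T v w = 1.
  rewrite -(pass_prob0 p1 T v c) -(sum_weight_leading_run p1_add_p2 (leq0n m)).
  by apply: eq_bigr => w _; rewrite (_ : [forall _, _] = true) ?mulr1 //; apply/forallP.
under eq_bigr do rewrite natrD mulrDr sub_passed_sum natr_sum mulr_sumr.
rewrite big_split /= -mulr_suml total mul1r exchange_big big_add1 /= big_mkord.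
by congr (_ + _); apply: eq_bigr => k _; rewrite sum_weight_leading_run.
Qed.

End Expectation.

Section ClosedForm.

Variables (R : fieldType) (x : R) (m T : nat) (v : nat -> nat) (c : nat -> bool).
Hypothesis x_neq0 : x != 0.
Hypothesis x_neq1 : 1 - x != 0.
Hypothesis v0 : v 0 = 1%N.
Hypothesis vT : v T.+1 = m.+1.
Hypothesis v_incr : forall l, (1 <= l)%N -> (l < T)%N -> (v l < v l.+1)%N.
Hypothesis v_bound :
  forall l, (1 <= l)%N -> (l <= T)%N -> (1 <= v l)%N && (v l <= m)%N.

Lemma v_ltnS l : (1 <= l)%N -> (l <= T)%N -> (v l < v l.+1)%N.
Proof.
move=> l_pos; rewrite leq_eqVlt => /orP [/eqP eq_lT | /v_incr]; last exact.
by subst l; rewrite vT ltnS; case/andP: (v_bound l_pos (leqnn T)).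
Qed.

Lemma v_ltn i j : (1 <= i)%N -> (i < j)%N -> (j <= T.+1)%N -> (v i < v j)%N.
Proof.
move=> i_pos; elim: j => [//|j IH]; rewrite ltnS leq_eqVlt => /orP [/eqP <- | lt_ij].
  by move=> le_iT; apply: v_ltnS.
move=> le_jT; apply: ltn_trans (IH lt_ij (ltnW le_jT)) (v_ltnS _ le_jT).
exact: leq_trans lt_ij.
Qed.

Lemma v_leq i j : (1 <= i)%N -> (i <= j)%N -> (j <= T.+1)%N -> (v i <= v j)%N.
Proof.
move=> i_pos; rewrite leq_eqVlt => /orP [/eqP <- // | lt_ij] le_jT.
exact/ltnW/v_ltn.
Qed.

Lemma v_pos l : (l <= T.+1)%N -> (1 <= v l)%N.
Proof.
rewrite leq_eqVlt ltnS => /orP [/eqP -> | le_lT]; first by rewrite vT.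
case: l le_lT => [|l] le_lT; first by rewrite v0.
by case/andP: (v_bound (ltn0Sn l) le_lT).
Qed.

Lemma v_geq l : (l <= T.+1)%N -> (l <= v l)%N.
Proof.
elim: l => [//|l IH] le_lT; have [-> | l_pos] := posnP l; first exact: v_pos.
exact: leq_ltn_trans (IH (ltnW le_lT)) (v_ltn l_pos (ltnSn l) le_lT).
Qed.

Lemma v_inj : {in [pred l | (1 <= l <= T)%N] &, injective v}.
Proof.
move=> i j /andP [i_pos le_iT] /andP [j_pos le_jT] eq_v.
case: (ltngtP i j) => // [lt_ij | lt_ji].
  by have := v_ltn i_pos lt_ij (leqW le_jT); rewrite eq_v ltnn.
by have := v_ltn j_pos lt_ji (leqW le_iT); rewrite eq_v ltnn.
Qed.

Lemma ncommS j :
  ncomm T v j.+1 = (ncomm T v j + \sum_(1 <= l < T.+1) (v l == j.+1))%N.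
Proof.
rewrite /ncomm -big_split; apply: eq_bigr => l _ /=.
rewrite leq_eqVlt ltnS; case: eqP => [-> | _]; last by rewrite addn0.
by rewrite ltnn.
Qed.

Lemma pass_prob_ncomm j :
  (forall l, (1 <= l)%N -> (l <= T)%N -> (v l <= j)%N -> c l) ->
  pass_prob x T v c j * x ^+ ncomm T v j = x ^+ j.
Proof.
elim: j => [|j IH] c_j.
  rewrite pass_prob0 mul1r /ncomm big_nat big1 // => l /andP [_ lt_lT].
  by case: (v l) (v_pos (ltnW lt_lT)).
rewrite pass_probS ncommS /intent_prob.
case: pickP => [l0 /andP [l0_pos /eqP vl0] | none].
  rewrite (bigD1_seq (val l0)) ?mem_index_iota ?iota_uniq ?l0_pos //= vl0 eqxx.
  rewrite big1_seq
    => [|l /andP [ne_l /[!mem_index_iota] /andP [l_pos /[!ltnS] le_lT]]].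
    rewrite (c_j _ l0_pos (leq_ord l0)) ?vl0 //= addn0 addn1 mulr1 !exprS -IH.
      by rewrite mulrCA.
    by move=> l l_pos le_lT le_vlj; apply: c_j; rewrite // ltnW.
  suff /negbTE -> : v l != j.+1 by [].
  apply: contra ne_l => /eqP vl; apply/eqP.
  by apply: v_inj; rewrite ?inE ?l_pos ?l0_pos ?(leq_ord l0) ?vl ?vl0.
rewrite big1_seq => [|l /andP [_ /[!mem_index_iota] /andP [l_pos lt_lT]]].
  rewrite addn0 exprS -IH; first by rewrite -mulrA mulrCA.
  by move=> l l_pos le_lT le_vlj; apply: c_j; rewrite // ltnW.
by move: (none (inord l)); rewrite inordK // l_pos /= => ->.
Qed.

Section Block.

Variables (l j : nat).
Hypothesis le_lT : (l <= T)%N.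
Hypothesis in_block : (v l <= j < v l.+1)%N.

Lemma v_leq_block l' : (1 <= l')%N -> (l' <= T)%N -> (v l' <= j)%N = (l' <= l)%N.
Proof.
case/andP: in_block => le_vl_j lt_j_vl1 l'_pos le_l'T.
apply/idP/idP => [le_vl'_j | le_l'l].
  rewrite leqNgt; apply/negP => lt_ll'.
  have := v_leq (ltn0Sn l) lt_ll' (leqW le_l'T).
  by rewrite leqNgt (leq_ltn_trans le_vl'_j).
exact: leq_trans (v_leq l'_pos le_l'l (leqW le_lT)) le_vl_j.
Qed.

Lemma ncomm_block : ncomm T v j = l.
Proof.
rewrite /ncomm (eq_big_nat _ _ (F2 := fun l' => (l' <= l)%N : nat)); last first.
  by move=> l' /andP [l'_pos /[!ltnS] le_l'T]; rewrite v_leq_block.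
rewrite (big_cat_nat _ (n := l.+1)) //= ?ltnS // (eq_big_nat _ _ (F2 := fun=> 1%N)).
  rewrite (eq_big_nat _ _ (F1 := fun l' => (l' <= l)%N : nat) (F2 := fun=> 0%N)).
    by rewrite !sum_nat_const_nat muln0 muln1 addn0 subn1.
  by move=> l' /andP [lt_ll' _]; rewrite leqNgt lt_ll'.
by move=> l' /andP [_ /[!ltnS] ->].
Qed.

Lemma pass_prob_block : (forall l', (1 <= l')%N -> (l' <= l)%N -> c l') ->
  pass_prob x T v c j = x ^+ (j - l).
Proof.
move=> c_l; have le_lj : (l <= j)%N.
  by case/andP: in_block => le_vl_j _; exact: leq_trans (v_geq (leqW le_lT)) le_vl_j.
rewrite exprB ?unitfE // -ncomm_block -pass_prob_ncomm ?mulfK ?expf_neq0 //.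
by move=> l' l'_pos le_l'T; rewrite v_leq_block //; apply: c_l.
Qed.

End Block.

Lemma pass_prob_eq0 L j : (1 <= L)%N -> (L <= T)%N -> c L = false ->
  (v L <= j)%N -> pass_prob x T v c j = 0.
Proof.
move=> L_pos le_LT cL le_vL_j; rewrite /pass_prob (big_cat_nat _ (n := (v L).+1)) //=.
by rewrite big_nat_recr ?v_pos ?leqW //= (intent_prob_comm _ _ v_inj) // cL mulr0 mul0r.
Qed.

Lemma term_telescope l : (1 <= v l)%N -> (l <= v l)%N -> (v l <= v l.+1)%N ->
  (l < v l.+1)%N ->
  term x (1 - x) v l
  = \sum_(v l <= j < v l.+1) x ^+ (j - l) + tail_term x v l - tail_term x v l.+1.
Proof.
move=> vl_pos le_l_vl le_vl_vl1 lt_l_vl1.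
have block_sum : (1 - x) * \sum_(v l <= j < v l.+1) x ^+ (j - l)
    = (x ^+ v l - x ^+ v l.+1) / x ^+ l.
  rewrite (eq_big_nat _ _ (F2 := fun j => x ^+ j / x ^+ l)); last first.
    by move=> j /andP [le_vl_j _]; rewrite exprB ?unitfE ?(leq_trans le_l_vl).
  by rewrite -mulr_suml mulrA geometric_sum_nat.
have -> : \sum_(v l <= j < v l.+1) x ^+ (j - l)
    = (x ^+ v l - x ^+ v l.+1) / x ^+ l / (1 - x).
  by rewrite -block_sum mulrC mulKf.
have E1 : x ^ (1 - l%:Z) = x / x ^+ l.
  by have := expfz_subn 1 l x_neq0; rewrite expr1.
have E2 : x ^ ((v l)%:Z - 1) = x ^+ v l / x.
  by have := expfz_subn (v l) 1 x_neq0; rewrite expr1.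
have E3 : x ^ ((v l.+1)%:Z - 2) = x ^+ v l.+1 / (x * x).
  by have := expfz_subn (v l.+1) 2 x_neq0; rewrite expr2.
have xl_neq0 : x ^+ l != 0 by rewrite expf_neq0.
rewrite /term /tail_term E1 E2 E3 !natrB ?(leq_trans vl_pos) // !exprB ?unitfE //.
rewrite exprSr; field.
by rewrite x_neq0 x_neq1 xl_neq0.
Qed.

Lemma sum_pass_prob_prefix l : (l <= T.+1)%N ->
  (forall l', (1 <= l')%N -> (l' < l)%N -> c l') ->
  \sum_(1 <= j < v l) pass_prob x T v c j
  = \sum_(0 <= l' < l) term x (1 - x) v l' + tail_term x v l.
Proof.
elim: l => [|l IH] lt_lT c_l.
  by rewrite v0 !big_geq // /tail_term v0 subnn mul0r addr0.
have le_lT : (l <= T.+1)%N := ltnW lt_lT.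
have le_vl_vl1 : (v l <= v l.+1)%N.
  have [-> | l_pos] := posnP l; first by rewrite v0 v_pos.
  exact: v_leq l_pos (leqnSn l) lt_lT.
have c_before l' : (1 <= l')%N -> (l' < l)%N -> c l'.
  by move=> l'_pos lt_l'l; apply: c_l; rewrite // ltnW.
rewrite (big_cat_nat _ (n := v l)) ?v_pos //= (IH le_lT c_before).
rewrite (eq_big_nat _ _ (F1 := pass_prob x T v c) (F2 := fun j => x ^+ (j - l))).
  rewrite big_nat_recr //= term_telescope ?v_pos ?v_geq //.
  by rewrite -[in RHS]addrA subrK addrA addrAC.
by move=> j j_block; apply: (pass_prob_block lt_lT j_block).
Qed.

End ClosedForm.

Theorem theorem2 (R : realFieldType) (p1 p2 : R) (cf : conf) (n T : nat)
  (v : nat -> nat) (c : nat -> bool) :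
  0 < p1 -> p1 < 1 -> p2 = 1 - p1 ->
  (g_of cf <= n)%N ->
  (T <= n - g_of cf)%N ->
  v 0%N = 1%N -> v T.+1 = (n - g_of cf).+1 ->
  (forall l, (1 <= l)%N -> (l < T)%N -> (v l < v l.+1)%N) ->
  (forall l, (1 <= l)%N -> (l <= T)%N -> (1 <= v l)%N && (v l <= n - g_of cf)%N) ->
  ( (* condition C3 *)
    (forall l, (1 <= l)%N -> (l <= T)%N -> c l) ->
    EK p1 p2 cf n T v c =
      (g_of cf)%:R + \sum_(0 <= l < T.+1) term p1 p2 v l
      + (n - g_of cf)%:R * p1 ^+ (n - g_of cf - T))
  /\
  ( (* condition C4 *)
    forall L, (1 <= L)%N -> (L <= T)%N ->
    (forall l, (1 <= l)%N -> (l < L)%N -> c l) -> c L = false ->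
    EK p1 p2 cf n T v c =
      (g_of cf)%:R + \sum_(0 <= l < L) term p1 p2 v l
      + (v L - 1)%:R * p1 ^+ (v L - L)).
Proof.
move=> p1_gt0 p1_lt1 -> _ _ v0 vT v_incr v_bound.
have p1_neq0 : p1 != 0 by rewrite gt_eqF.
have p1_neq1 : 1 - p1 != 0 by rewrite subr_eq0 eq_sym lt_eqF.
have p1_add_p2 : p1 + (1 - p1) = 1 by rewrite addrC subrK.
have prefix := sum_pass_prob_prefix p1_neq0 p1_neq1 v0 vT v_incr v_bound.
rewrite (EK_sum_pass_prob c (v_inj vT v_incr v_bound) cf n p1_add_p2).
split=> [c_all | L L_pos le_LT c_before cL].
  by rewrite -vT (prefix c T.+1) // /tail_term vT subn1 subSS addrA.
have le_vL_m : (v L <= n - g_of cf)%N by case/andP: (v_bound L L_pos le_LT).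
have blocked : \sum_(v L <= j < (n - g_of cf).+1) pass_prob p1 T v c j = 0.
  rewrite big_nat_cond big1 // => j /andP [/andP [le_vL_j _] _].
  exact: (pass_prob_eq0 p1 v0 vT v_incr v_bound L_pos le_LT cL).
rewrite (big_cat_nat _ (n := v L)) ?(v_pos v0 vT v_bound) ?leqW //=.
by rewrite blocked addr0 (prefix c L) ?leqW // /tail_term addrA.
Qed.
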